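(* For every LTL formula $\varphi$ in positive normal form and every $\sigma\in\Sigma^\omega$: $\sigma\models\varphi$ if and only if there exists $\varphi'\in\Delta_{\sigma_0}(\varphi)$ with $\sigma[1\dots]\models\varphi'$. (In the paper's notation: $\varphi\Leftrightarrow\bigvee_{x\in\Sigma,\ \varphi'\in\Delta_x(\varphi)} x\wedge\mathbf X\varphi'$.)
   Context: Fix a finite set $AP$, a finite alphabet $\Sigma$ and $I:\Sigma\to\mathcal P(AP)$. LTL formulae in positive normal form: $\varphi,\psi ::= p \mid \neg p \mid \mathbf{tt} \mid \mathbf{ff} \mid \varphi\wedge\psi \mid \varphi\vee\psi \mid \mathbf{X}\varphi \mid \varphi\,\mathbf{U}\,\psi \mid \varphi\,\mathbf{R}\,\psi$; $\mathbf F\varphi=\mathbf{tt}\,\mathbf U\varphi$, $\mathbf G\varphi=\mathbf{ff}\,\mathbf R\varphi$. Semantics on $\sigma\in\Sigma^\omega$ ($\sigma_i$ the $i$-th symbol, $\sigma[n\dots]$ the suffix from position $n$): $\sigma\models p$ iff $p\in I(\sigma_0)$; $\sigma\models\neg p$ iff $p\notin I(\sigma_0)$; $\mathbf{tt}$ always, $\mathbf{ff}$ never; $\wedge,\vee$ usual; $\sigma\models\mathbf X\varphi$ iff $\sigma[1\dots]\models\varphi$; $\sigma\models\varphi\mathbf U\psi$ iff $\exists n$, $\sigma[j\dots]\models\varphi$ for all $j<n$ and $\sigma[n\dots]\models\psi$; $\sigma\models\varphi\mathbf R\psi$ iff for all $n$, $\sigma[n\dots]\models\psi$ or $\sigma[j\dots]\models\varphi$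 for some $j<n$. A temporal formula is one whose outermost operator is not $\wedge$ or $\vee$; conjunctions of temporal formulae are normalised modulo associativity, commutativity and idempotence ($\mathbf{tt}$ is the empty conjunction). $\mathrm{SIMP}(\varphi\wedge\psi)=\{\varphi'\wedge\psi'\mid\varphi'\in\mathrm{SIMP}(\varphi),\psi'\in\mathrm{SIMP}(\psi)\}$, $\mathrm{SIMP}(\varphi\vee\psi)=\mathrm{SIMP}(\varphi)\cup\mathrm{SIMP}(\psi)$, $\mathrm{SIMP}(\varphi)=\{\varphi\}$ for temporal $\varphi$. For a literal $\ell$ ($p$ or $\neg p$), $x\models p$ iff $p\in I(x)$ and $x\models\neg p$ iff $p\notin I(x)$. Direct partial derivative $\Delta_x$ ($x\in\Sigma$): $\Delta_x(\mathbf{tt})=\{\mathbf{tt}\}$; $\Delta_x(\mathbf{ff})=\emptyset$; $\Delta_x(\ell)=\{\mathbf{tt}\}$ if $x\models\ell$, else $\emptyset$; $\Delta_x(\varphi\vee\psi)=\Delta_x(\varphi)\cup\Delta_x(\psi)$; $\Delta_x(\varphi\wedge\psi)=\{\varphi'\wedge\psi'\mid\varphi'\in\Delta_x(\varphi),\psi'\in\Delta_x(\psi)\}$; $\Delta_x(\mathbf X\varphi)=\mathrm{SIMP}(\varphi)$; $\Delta_x(\varphi\mathbf U\psi)=\Delta_x(\psi)\cup\{\varphi'\wedge(\varphi\mathbf U\psi)\mid\varphi'\in\Delta_x(\varphi)\}$; $\Delta_x(\varphi\mathbf R\psi)=\{\varphi'\wedge\psi'\mid\varphi'\in\Delta_x(\varphi),\psi'\in\Delta_x(\psi)\}\cup\{\psi'\wedge(\varphi\mathbf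 R\psi)\mid\psi'\in\Delta_x(\psi)\}$; $\Delta_x(\mathbf F\varphi)=\Delta_x(\varphi)\cup\{\mathbf F\varphi\}$; $\Delta_x(\mathbf G\varphi)=\{\varphi'\wedge\mathbf G\varphi\mid\varphi'\in\Delta_x(\varphi)\}$. *)

From mathcomp Require Import all_boot.
Set Implicit Arguments.
Unset Strict Implicit.
Unset Printing Implicit Defensive.

Inductive ltl (AP : Type) : Type :=
| Atom of AP
| NAtom of AP
| Tt
| Ff
| And of ltl AP & ltl AP
| Or of ltl AP & ltl AP
| Next of ltl AP
| Until of ltl AP & ltl AP
| Release of ltl AP & ltl AP.

Arguments Tt {AP}.
Arguments Ff {AP}.

Definition Ev (AP : Type) (phi : ltl AP) := Until Tt phi.
Definition Glob (AP : Type) (phi : ltl AP) := Release Ff phi.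

Definition word (Sigma : Type) := nat -> Sigma.
Definition wsuffix (Sigma : Type) (n : nat) (sigma : word Sigma) : word Sigma :=
  fun i => sigma (n + i).

Section Sem.
Variables (AP Sigma : finType) (I : Sigma -> {set AP}).

Fixpoint sat (sigma : word Sigma) (phi : ltl AP) : Prop :=
  match phi with
  | Atom p => p \in I (sigma 0)
  | NAtom p => p \notin I (sigma 0)
  | Tt => True
  | Ff => False
  | And a b => sat sigma a /\ sat sigma b
  | Or a b => sat sigma a \/ sat sigma b
  | Next a => sat (wsuffix 1 sigma) a
  | Until a b => exists n, (forall j, j < n -> sat (wsuffix j sigma) a)
                           /\ sat (wsuffix n sigma) b
  | Release a b => forall n, sat (wsuffix n sigma) b
                             \/ exists j, j < n /\ sat (wsuffix j sigma) a
  end.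

(* A conjunction of temporal formulae is represented by the list of its
   conjuncts (order/duplicates are irrelevant; tt is the empty list).
   Sets of such conjunctions are represented by lists. *)
Definition conj := seq (ltl AP).

Definition conj_formula (c : conj) : ltl AP := foldr (@And AP) Tt c.

Definition conj_prod (A B : seq conj) : seq conj :=
  [seq a ++ b | a <- A, b <- B].

Fixpoint SIMP (phi : ltl AP) : seq conj :=
  match phi with
  | And a b => conj_prod (SIMP a) (SIMP b)
  | Or a b => SIMP a ++ SIMP b
  | Tt => [:: [::]]
  | _ => [:: [:: phi]]
  end.

Fixpoint Delta (x : Sigma) (phi : ltl AP) : seq conj :=
  match phi with
  | Tt => [:: [::]]
  | Ff => [::]
  | Atom p => if p \in I x then [:: [::]] else [::]
  | NAtom p => if p \notin I x then [:: [::]] else [::]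
  | Or a b => Delta x a ++ Delta x b
  | And a b => conj_prod (Delta x a) (Delta x b)
  | Next a => SIMP a
  | Until a b => Delta x b ++ [seq a' ++ [:: phi] | a' <- Delta x a]
  | Release a b => conj_prod (Delta x a) (Delta x b)
                   ++ [seq b' ++ [:: phi] | b' <- Delta x b]
  end.

End Sem.

(* Read a list of conjunctions as their disjunction: then list concatenation
   is disjunction and [conj_prod] is conjunction, and Delta_x distributes
   over the connectives.  The temporal cases are the expansion laws
   a U b = b \/ (a /\ X (a U b)) and a R b = b /\ (a \/ X (a R b)), so an
   induction on the formula proves the claim. *)

From Stdlib Require List.
From Stdlib Require Import Classical.
From mathcomp Require Import all_boot.

Section DeltaSemantics.
Variables (AP Sigma : finType) (I : Sigma -> {set AP}).

Lemma eq_sat (s t : word Sigma) (phi : ltl AP) :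
  s =1 t -> sat I s phi -> sat I t phi.
Proof.
elim: phi s t => [p|p|||a IHa b IHb|a IHa b IHb|a IHa|a IHa b IHb|a IHa b IHb]
  s t st /=; have st_suffix n : wsuffix n s =1 wsuffix n t by move=> i; apply: st.
- by rewrite st.
- by rewrite st.
- by [].
- by [].
- by case=> ? ?; split; [apply: IHa st _|apply: IHb st _].
- by case=> ?; [left; apply: IHa st _|right; apply: IHb st _].
- exact: IHa (st_suffix 1).
- case=> n [sat_a sat_b]; exists n; split; last exact: IHb (st_suffix n) sat_b.
  by move=> j lt_jn; apply: IHa (st_suffix j) (sat_a j lt_jn).
- move=> sat_R n; case: (sat_R n) => [sat_b|[j [lt_jn sat_a]]].
    by left; apply: IHb (st_suffix n) sat_b.
  by right; exists j; split => //; apply: IHa (st_suffix j) sat_a.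
Qed.

Lemma sat_Until_unfold (s : word Sigma) a b :
  sat I s (Until a b) <->
  sat I s b \/ (sat I s a /\ sat I (wsuffix 1 s) (Until a b)).
Proof.
split => /=.
  case=> [[|n] [sat_a sat_b]]; first by left; apply: eq_sat sat_b.
  right; split; first exact: eq_sat (sat_a 0 erefl).
  exists n; split; last exact: eq_sat sat_b.
  by move=> j lt_jn; apply: eq_sat (sat_a j.+1 lt_jn).
case=> [sat_b|[sat_a [n [sat_a' sat_b]]]].
  by exists 0; split => //; apply: eq_sat sat_b.
exists n.+1; split; last exact: eq_sat sat_b.
by case=> [|j] lt_jn; [apply: eq_sat sat_a|apply: eq_sat (sat_a' j lt_jn)].
Qed.

Lemma sat_Release_unfold (s : word Sigma) a b :
  sat I s (Release a b) <->
  sat I s b /\ (sat I s a \/ sat I (wsuffix 1 s) (Release a b)).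
Proof.
split => /=.
  move=> sat_R; split.
    by case: (sat_R 0) => [sat_b|[j []]] //; apply: eq_sat sat_b.
  have [sat_a|unsat_a] := classic (sat I s a); first by left.
  right => n; case: (sat_R n.+1) => [sat_b|[[|j] [lt_jn sat_a]]].
  - by left; apply: eq_sat sat_b.
  - by case: unsat_a; apply: eq_sat sat_a.
  - by right; exists j; split => //; apply: eq_sat sat_a.
case=> [sat_b sat_next] [|n]; first by left; apply: eq_sat sat_b.
case: sat_next => [sat_a|sat_R].
  by right; exists 0; split => //; apply: eq_sat sat_a.
case: (sat_R n) => [sat_b'|[j [lt_jn sat_a]]]; first by left; apply: eq_sat sat_b'.
by right; exists j.+1; split => //; apply: eq_sat sat_a.
Qed.

Lemma sat_conj_cat (s : word Sigma) (c d : conj AP) :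
  sat I s (conj_formula (c ++ d)) <->
  sat I s (conj_formula c) /\ sat I s (conj_formula d).
Proof. by elim: c => [|phi c IHc] /=; [tauto|rewrite IHc; tauto]. Qed.

Lemma in_conj_prod (A B : seq (conj AP)) c :
  List.In c (conj_prod A B) <->
  exists c1 c2, [/\ List.In c1 A, List.In c2 B & c = c1 ++ c2].
Proof.
rewrite /conj_prod; elim: A => [|c1 A IHA] /=.
  by split => // [[c1 [c2 [[]]]]].
rewrite List.in_app_iff IHA List.in_map_iff; split.
  case=> [[c2 [<- inB]]|[c1' [c2 [inA inB ->]]]].
    by exists c1, c2; split => //; left.
  by exists c1', c2; split => //; right.
case=> c1' [c2 [[<-|inA] inB ->]]; first by left; exists c2.
by right; exists c1', c2.
Qed.

Definition sat_some (s : word Sigma) (A : seq (conj AP)) : Prop :=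
  exists2 c, List.In c A & sat I s (conj_formula c).

Lemma sat_some_nil (s : word Sigma) : sat_some s [::] <-> False.
Proof. by split => // [[]]. Qed.

Lemma sat_some_tt (s : word Sigma) : sat_some s [:: [::]] <-> True.
Proof. by split => // _; exists [::]; [left|]. Qed.

Lemma sat_some_formula (s : word Sigma) phi :
  sat_some s [:: [:: phi]] <-> sat I s phi.
Proof.
split; first by case=> c [<-|[]] [].
by exists [:: phi]; [left|].
Qed.

Lemma sat_some_cat (s : word Sigma) A B :
  sat_some s (A ++ B) <-> sat_some s A \/ sat_some s B.
Proof.
split; first by case=> c /List.in_app_iff [] inAB sat_c; [left|right]; exists c.
by case=> [] [c inAB sat_c]; exists c => //; apply/List.in_app_iff; [left|right].
Qed.

Lemma sat_some_prod (s : word Sigma) A B :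
  sat_some s (conj_prod A B) <-> sat_some s A /\ sat_some s B.
Proof.
split.
  by case=> c /in_conj_prod [c1 [c2 [inA inB ->]]] /sat_conj_cat [];
    split; [exists c1|exists c2].
case=> [[c1 inA sat_c1] [c2 inB sat_c2]]; exists (c1 ++ c2).
  by apply/in_conj_prod; exists c1, c2.
exact/sat_conj_cat.
Qed.

Lemma sat_some_rcons (s : word Sigma) A phi :
  sat_some s [seq c ++ [:: phi] | c <- A] <-> sat_some s A /\ sat I s phi.
Proof.
split.
  by case=> c /List.in_map_iff [c1 [<- inA]] /sat_conj_cat [sat_c1 []];
    split => //; exists c1.
case=> [[c inA sat_c] sat_phi]; exists (c ++ [:: phi]).
  by apply/List.in_map_iff; exists c.
exact/sat_conj_cat.
Qed.

Lemma sat_SIMP (s : word Sigma) phi : sat I s phi <-> sat_some s (SIMP phi).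
Proof.
elim: phi => [p|p|||a IHa b IHb|a IHa b IHb|a _|a _ b _|a _ b _];
  rewrite [SIMP _]/= ?sat_some_formula //.
- by rewrite sat_some_tt.
- by rewrite sat_some_prod -IHa -IHb.
- by rewrite sat_some_cat -IHa -IHb.
Qed.

Lemma sat_Delta (s : word Sigma) phi :
  sat I s phi <-> sat_some (wsuffix 1 s) (Delta I (s 0) phi).
Proof.
elim: phi s => [p|p|||a IHa b IHb|a IHa b IHb|a _|a IHa b IHb|a IHa b IHb] s;
  rewrite [Delta _ _ _]/=.
- by case: ifP => /= ->; rewrite ?sat_some_tt ?sat_some_nil.
- by case: ifP => /= ->; rewrite ?sat_some_tt ?sat_some_nil.
- by rewrite sat_some_tt.
- by rewrite sat_some_nil.
- by rewrite sat_some_prod -IHa -IHb.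
- by rewrite sat_some_cat -IHa -IHb.
- exact: (sat_SIMP (wsuffix 1 s) a).
- by rewrite sat_Until_unfold sat_some_cat sat_some_rcons -IHa -IHb.
- rewrite sat_Release_unfold sat_some_cat sat_some_rcons sat_some_prod -IHa -IHb.
  tauto.
Qed.

End DeltaSemantics.

Theorem lemma9 (AP Sigma : finType) (I : Sigma -> {set AP})
    (phi : ltl AP) (sigma : word Sigma) :
  sat I sigma phi <->
  exists2 phi' : conj AP, List.In phi' (Delta I (sigma 0) phi) &
    sat I (wsuffix 1 sigma) (conj_formula phi').
Proof. exact: sat_Delta. Qed.
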